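(* The cobordism group of two-dimensional geometric graphs is nontrivial: there exists a graph $G$ in which every unit sphere is a cycle $C_n$ with $n\ge4$, such that $G$ is not the boundary of any three-dimensional geometric graph with boundary.
   Context: All graphs are finite simple graphs. For a vertex $x$, $S(x)$ is the subgraph induced by the neighbors of $x$. A graph is contractible if it is $K_1$, or, inductively, if there is a vertex $x$ with both $S(x)$ and the subgraph induced by $V\setminus\{x\}$ contractible. $\mathcal{G}_0$: graphs without edges; $\mathcal{S}_0$: those with two vertices; $\mathcal{B}_0$: those with one vertex. For $d\ge1$: $\mathcal{G}_d$ is the class of graphs in which every $S(x)$ lies in $\mathcal{S}_{d-1}\cup\mathcal{B}_{d-1}$; the boundary $\delta G$ is the subgraph induced by vertices with $S(x)\in\mathcal{B}_{d-1}$, and the interior must be nonempty; $\mathcal{B}_d$: contractible graphs in $\mathcal{G}_d$ with boundary in $\mathcal{S}_{d-1}$; $\mathcal{S}_d$: non-contractible graphs in $\mathcal{G}_d$ such that removing any single vertex yields a graph in $\mathcal{B}_d$. A three-dimensional geometric graph with boundary is a graph in $\mathcal{G}_3$. Two closed two-dimensional geometric graphs are cobordant if their disjoint union is the boundary $\delta H$ of some three-dimensional geometric graph with boundary $H$; cobordism classes form a group under disjoint union, whose neutral element is the class of graphs cobordant to the empty graph (boundaries). *)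

(* Finite simple graphs = symmetric irreflexive relations on a finType;
   subgraphs are the induced subgraphs on subsets A : {set T}. *)
From mathcomp Require Import all_boot.
Set Implicit Arguments. Unset Strict Implicit. Unset Printing Implicit Defensive.

Section Geom.
Variables (T : finType) (e : rel T).

Definition nbr (A : {set T}) (x : T) : {set T} := [set y in A | e x y].

Inductive contractible : {set T} -> Prop :=
| contr_K1 (A : {set T}) : #|A| = 1 -> contractible A
| contr_step (A : {set T}) (x : T) : x \in A ->
    contractible (nbr A x) -> contractible (A :\ x) -> contractible A.

Definition edgeless (A : {set T}) : Prop :=
  forall x y, x \in A -> y \in A -> ~~ e x y.

(* D is the boundary of A, where Bp is the class B_{d-1} *)
Definition is_bdry (Bp : {set T} -> Prop) (A D : {set T}) : Prop :=
  forall x, x \in D <-> (x \in A /\ Bp (nbr A x)).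

(* membership in G_d, given Sp = S_{d-1}, Bp = B_{d-1}, for d >= 1:
   every sphere in S_{d-1} or B_{d-1}, and the interior is nonempty *)
Definition inGstep (Sp Bp : {set T} -> Prop) (A : {set T}) : Prop :=
  (forall x, x \in A -> Sp (nbr A x) \/ Bp (nbr A x)) /\
  (exists x, x \in A /\ ~ Bp (nbr A x)).

Fixpoint SB (d : nat) : ({set T} -> Prop) * ({set T} -> Prop) :=
  match d with
  | 0 => (fun A => edgeless A /\ #|A| = 2, fun A => edgeless A /\ #|A| = 1)
  | d'.+1 =>
    let Sp := (SB d').1 in let Bp := (SB d').2 in
    let Bd := fun A => contractible A /\ inGstep Sp Bp A /\
                       exists D, is_bdry Bp A D /\ Sp D in
    (fun A => ~ contractible A /\ inGstep Sp Bp A /\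
              forall x, x \in A -> Bd (A :\ x), Bd)
  end.

Definition inS d := (SB d).1.
Definition inB d := (SB d).2.

Definition inG (d : nat) (A : {set T}) : Prop :=
  match d with 0 => edgeless A | d'.+1 => inGstep (inS d') (inB d') A end.

Definition boundary (d : nat) (A D : {set T}) : Prop := is_bdry (inB d.-1) A D.

Definition is_cycle_ge4 (A : {set T}) : Prop :=
  exists s : seq T, [/\ 4 <= size s, uniq s, A =i s &
    forall x0 i j, i < size s -> j < size s ->
      e (nth x0 s i) (nth x0 s j) =
      (j == i.+1 %% size s) || (i == j.+1 %% size s)].

End Geom.

Definition simple_graph (T : finType) (e : rel T) : Prop := symmetric e /\ irreflexive e.

(* Write [rchi X = 1 - chi(X)] for the clique Euler characteristic.  In a
   3-dimensional geometric graph H, the unit sphere of a vertex has rchi = -1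
   (a 2-sphere) at interior vertices and rchi = 0 (a disc) on the boundary.
   For an edge uw, the unit sphere of w inside S(u) is a circle (rchi = 1),
   except when u and w both lie on the boundary: the boundary circle of the
   disc S(u) sits inside the unit sphere of u in the boundary, which is a
   cycle, so the two coincide and w is a boundary point of S(u), whence its
   unit sphere there is an arc (rchi = 0).  Summing over vertices and oriented
   edges and expanding every sum over the cliques of H, which have at most
   four vertices, yields 2V + 2E = 0 (mod 4) for the numbers V and E of
   vertices and edges of the boundary.  A 14-vertex triangulation of the
   projective plane has V + E = 14 + 39, which is odd. *)

From mathcomp Require Import all_boot ssralg ssrint intdiv.
Set Implicit Arguments. Unset Strict Implicit. Unset Printing Implicit Defensive.
Import GRing.Theory.

Lemma in_nbr (V : finType) (g : rel V) (A : {set V}) x y :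
  (y \in nbr g A x) = (y \in A) && g x y.
Proof. by rewrite inE. Qed.

Section Cliques.
Variables (U : finType) (f : rel U).
Hypotheses (f_sym : symmetric f) (f_irr : irreflexive f).

Definition clique (K : {set U}) : bool :=
  [forall x in K, forall y in K, (x != y) ==> f x y].

Lemma cliqueP (K : {set U}) :
  reflect (forall x y, x \in K -> y \in K -> x != y -> f x y) (clique K).
Proof.
apply: (iffP forallP) => [H x y xK yK nxy | H x].
  by move: (H x); rewrite xK /= => /forallP/(_ y); rewrite yK nxy.
by apply/implyP => xK; apply/forallP => y; apply/implyP => yK; apply/implyP; apply: H.
Qed.

Lemma notin_nbr (A K : {set U}) x : K \subset nbr f A x -> x \notin K.
Proof. by move/subsetP => sKN; apply/negP => /sKN; rewrite in_nbr f_irr andbF. Qed.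

Lemma clique_setU1 (A K : {set U}) x : x \in A ->
  [&& clique (x |: K), x |: K \subset A & (x |: K) :\ x == K]
  = clique K && (K \subset nbr f A x).
Proof.
move=> xA; apply/and3P/andP => [[/cliqueP cl sKA /eqP eK] | [/cliqueP cl sKN]].
  have xK : x \notin K by rewrite -eK setD11.
  split.
    by apply/cliqueP => a b aK bK; apply: cl; rewrite inE ?aK ?bK orbT.
  apply/subsetP => y yK; rewrite in_nbr (subsetP sKA) ?inE ?yK ?orbT //.
  by apply: cl; rewrite ?inE ?eqxx ?yK ?orbT //; apply: contraNneq xK => ->.
have xK := notin_nbr sKN; move/subsetP: sKN => sKN.
split; last by rewrite setU1K.
- apply/cliqueP => a b; rewrite !inE => /predU1P[->|aK] /predU1P[->|bK].
  + by rewrite eqxx.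
  + by move=> _; have := sKN b bK; rewrite in_nbr => /andP[].
  + by move=> _; rewrite f_sym; have := sKN a aK; rewrite in_nbr => /andP[].
  + exact: cl.
- by apply/subsetP => y /setU1P[->//|/sKN]; rewrite in_nbr => /andP[].
Qed.

Local Open Scope ring_scope.

Lemma big_cliques_nbr (A : {set U}) x (F : {set U} -> int) : x \in A ->
  \sum_(K | clique K && (K \subset nbr f A x)) F (x |: K) =
  \sum_(C | clique C && (C \subset A) && (x \in C)) F C.
Proof.
move=> xA; symmetry.
rewrite (reindex_onto (fun K => x |: K) (fun C => C :\ x)) /=.
  by apply: eq_bigl => K; rewrite setU11 andbT -(clique_setU1 K xA) andbA.
by move=> C /andP[_ xC]; rewrite setD1K.
Qed.

(* [rchi X] = 1 - chi(X): the alternating clique count with the empty clique. *)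
Definition rchi (X : {set U}) : int :=
  \sum_(K | clique K && (K \subset X)) (-1) ^+ #|K|.

Lemma rchi_setD1 (A : {set U}) x : x \in A ->
  rchi A = rchi (A :\ x) - rchi (nbr f A x).
Proof.
move=> xA; rewrite /rchi (bigID (fun K : {set U} => x \in K)) /= addrC.
congr (_ + _); first by apply: eq_bigl => K; rewrite subsetD1 andbA.
rewrite -(big_cliques_nbr _ xA) -sumrN.
apply: eq_bigr => K /andP[_ sKN].
by rewrite cardsU1 (notin_nbr sKN) exprS mulN1r.
Qed.

Lemma big_cliques_card0 (X : {set U}) :
  \sum_(K | clique K && (K \subset X)) ((#|K| == 0)%:R : int) = 1.
Proof.
rewrite (bigD1 set0) /=; last by rewrite sub0set andbT; apply/cliqueP => a b; rewrite inE.
rewrite cards0 big1 ?addr0 // => K /andP[_ nK].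
by rewrite cards_eq0 (negbTE nK).
Qed.

Lemma rchi_set0 : rchi set0 = 1.
Proof.
rewrite -(big_cliques_card0 set0); apply: eq_bigr => K /andP[_].
by rewrite subset0 => /eqP ->; rewrite cards0.
Qed.

Lemma rchi_set1 a : rchi [set a] = 0.
Proof.
have nbr_a : nbr f [set a] a = set0.
  by apply/setP => z; rewrite !inE; case: eqP => // ->; rewrite f_irr.
by rewrite (rchi_setD1 (set11 a)) setDv nbr_a subrr.
Qed.

Lemma big_nbr_cliques (A : {set U}) (G : nat -> int) :
  \sum_(v in A) \sum_(K | clique K && (K \subset nbr f A v)) G #|K| =
  \sum_(C | clique C && (C \subset A)) G #|C|.-1 *+ #|C|.
Proof.
transitivity (\sum_(v in A) \sum_(C | clique C && (C \subset A))
   (if v \in C then G #|C|.-1 else 0)).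
  apply: eq_bigr => v vA.
  rewrite -big_mkcondr -(big_cliques_nbr (fun C => G #|C|.-1) vA).
  apply: eq_bigr => K /andP[_ sKN].
  by rewrite cardsU1 (notin_nbr sKN).
rewrite exchange_big; apply: eq_bigr => C /andP[_ sCA].
rewrite -big_mkcondr (eq_bigl (mem C)) ?sumr_const // => v /=.
by apply/andP/idP => [[]//|vC]; split => //; apply: (subsetP sCA).
Qed.

Lemma big_nbr2_cliques (A : {set U}) (G : nat -> int) :
  \sum_(u in A) \sum_(w in nbr f A u)
     \sum_(K | clique K && (K \subset nbr f (nbr f A u) w)) G #|K| =
  \sum_(C | clique C && (C \subset A)) G #|C|.-2 *+ #|C|.-1 *+ #|C|.
Proof.
rewrite -(big_nbr_cliques _ (fun k => G k.-1 *+ k)).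
by apply: eq_bigr => u _; rewrite big_nbr_cliques.
Qed.

End Cliques.

Section Spheres.
Variables (U : finType) (f : rel U).
Hypotheses (f_sym : symmetric f) (f_irr : irreflexive f).
Local Notation rchi := (rchi f).
Local Notation clique := (clique f).

Lemma inS0E A : inS f 0 A <-> edgeless f A /\ #|A| = 2.
Proof. by []. Qed.

Lemma inB0E A : inB f 0 A <-> edgeless f A /\ #|A| = 1.
Proof. by []. Qed.

Lemma inSSE d A : inS f d.+1 A <->
  [/\ ~ contractible f A, inGstep f (inS f d) (inB f d) A &
      forall x, x \in A -> inB f d.+1 (A :\ x)].
Proof. by split=> [[? []]|[]]. Qed.

Lemma inBSE d A : inB f d.+1 A <->
  [/\ contractible f A, inGstep f (inS f d) (inB f d) A &
      exists D, is_bdry f (inB f d) A D /\ inS f d D].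
Proof. by split=> [[? []]|[]]. Qed.

Lemma nbr_setD1 (A : {set U}) x y : nbr f (A :\ y) x = nbr f A x :\ y.
Proof. by apply/setP => z; rewrite !inE andbA. Qed.

Lemma nbrC (A : {set U}) u w : nbr f (nbr f A u) w = nbr f (nbr f A w) u.
Proof. by apply/setP => z; rewrite !inE; case: (z \in A) (f u z) (f w z) => [] [] []. Qed.

Lemma contractible_rchi A : contractible f A -> rchi A = 0%R.
Proof.
elim=> [B /eqP/cards1P[a ->] | B x xB _ IHn _ IHd]; first exact: rchi_set1.
by rewrite (rchi_setD1 f_sym f_irr xB) IHn IHd subrr.
Qed.

Lemma inB_contractible d A : inB f d A -> contractible f A.
Proof. by case: d => [/inB0E[_ /contr_K1] | d /inBSE[]]. Qed.

Lemma inS_rchi d A : inS f d A -> rchi A = (- (-1) ^+ d)%R.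
Proof.
elim: d A => [|d IHd] A.
  case/inS0E => edA /eqP/cards2P[a [b [nab eA]]]; rewrite {A}eA in edA *.
  have aA : a \in [set a; b] by rewrite !inE eqxx.
  rewrite (rchi_setD1 f_sym f_irr aA).
  have -> : [set a; b] :\ a = [set b] by rewrite setU1K ?inE.
  have -> : nbr f [set a; b] a = set0.
    apply/setP => z; rewrite in_nbr in_set0; apply/negbTE/andP => -[zA faz].
    by move: (edA a z aA zA); rewrite faz.
  by rewrite (rchi_set1 f_sym f_irr) (rchi_set0 f).
case/inSSE => _ [sphA [x [xA nBx]]] delA.
have Sx : inS f d (nbr f A x) by case: (sphA x xA).
rewrite (rchi_setD1 f_sym f_irr xA) (IHd _ Sx).
by rewrite (contractible_rchi (inB_contractible (delA x xA))) sub0r exprS mulN1r !opprK.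
Qed.

Lemma inS_inB_disjoint d A : inS f d A -> ~ inB f d A.
Proof.
case: d => [/inS0E[_ cA2] /inB0E[_] | d /inSSE[ncA _ _] /inBSE[]//].
by rewrite cA2.
Qed.

Lemma inS1_nbr C y : inS f 1 C -> y \in C -> inS f 0 (nbr f C y).
Proof.
case/inSSE => _ [sphC _] delC yC.
case: (sphC y yC) => // /inB0E[_ /eqP/cards1P[a Ny]].
have /andP[aC fya] : (a \in C) && f y a by rewrite -in_nbr Ny set11.
have yCa : y \in C :\ a by rewrite !inE yC andbT; apply: contraTneq fya => ->; rewrite f_irr.
have Nya : nbr f (C :\ a) y = set0 by rewrite nbr_setD1 Ny setDv.
have /inBSE[_ [sphCa _] _] := delC a aC.
by case: (sphCa y yCa); rewrite Nya => -[_]; rewrite cards0.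
Qed.

Lemma inS2_nbr S x : inS f 2 S -> x \in S -> inS f 1 (nbr f S x).
Proof.
case/inSSE => _ [sphS _] delS xS.
case: (sphS x xS) => // BP; set P := nbr f S x in BP *.
case/inBSE: BP => cP [sphP [y [yP nBy]]] _.
have Py : inS f 0 (nbr f P y) by case: (sphP y yP).
have rPy : rchi (P :\ y) = (-1)%R.
  have := rchi_setD1 f_sym f_irr yP.
  rewrite (contractible_rchi cP) (inS_rchi Py) expr0 opprK.
  by move/esym/eqP; rewrite addr_eq0 => /eqP.
move: yP; rewrite in_nbr => /andP[yS fxy].
have xSy : x \in S :\ y by rewrite !inE xS andbT; apply: contraTneq fxy => ->; rewrite f_irr.
have /inBSE[_ [sphSy _] _] := delS y yS.
case: (sphSy x xSy); rewrite nbr_setD1 -/P.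
  by move/inS_rchi; rewrite rPy expr1 opprK.
by move/inB_contractible/contractible_rchi; rewrite rPy.
Qed.

Lemma inSB_inG d A : inS f d A \/ inB f d A -> inG f d A.
Proof. by case: d => [[/inS0E[] | /inB0E[]] | d [/inSSE[] | /inBSE[]]]. Qed.

Lemma clique_card_le d (A K : {set U}) :
  inG f d A -> clique K -> K \subset A -> #|K| <= d.+1.
Proof.
elim: d A K => [|d IHd] A K.
  move=> edA /cliqueP clK /subsetP sKA; apply/card_le1_eqP => x y xK yK.
  apply/eqP/negP => /negP nxy; rewrite eq_sym in nxy.
  by move: (edA x y (sKA x xK) (sKA y yK)); rewrite (clK x y xK yK nxy).
move=> [sphA _] clK sKA.
have [->|[x xK]] := set_0Vmem K; first by rewrite cards0.
have xA : x \in A := subsetP sKA x xK.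
have := clique_setU1 f_sym f_irr (K :\ x) xA.
rewrite setD1K // eqxx andbT clK sKA => /esym/andP[clKx sKxN].
rewrite (cardsD1 x K) xK add1n ltnS.
exact: IHd _ _ (inSB_inG (sphA x xA)) clKx sKxN.
Qed.

End Spheres.

Section CycleSubgraphs.
Variables (V : finType) (g : rel V) (x0 : V) (s : seq V).
Local Notation n := (size s).
Local Notation "s_[ i ]" := (nth x0 s i) (format "s_[ i ]").
Hypothesis s_cycle : forall i j, i < n -> j < n ->
  g s_[i] s_[j] = (j == i.+1 %% n) || (i == j.+1 %% n).

Lemma cycle_nbr_subset (Y : {set V}) i : {subset Y <= s} -> i < n ->
  nbr g Y s_[i] \subset [set s_[i.+1 %% n]; s_[(i + n.-1) %% n]].
Proof.
move=> sYs lt_i_n; apply/subsetP => t; rewrite in_nbr => /andP[/sYs ts].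
rewrite -(nth_index x0 ts) s_cycle ?index_mem // !inE.
have n_gt0 : 0 < n := leq_ltn_trans (leq0n i) lt_i_n.
case/orP => [/eqP -> | /eqP ->]; first by rewrite eq_refl.
have lt_t_n : index t s < n by rewrite index_mem.
by rewrite modnDml addSn -addnS prednK // modnDr (modn_small lt_t_n) eqxx orbT.
Qed.

Lemma cycle_2regular_subgraph (Y : {set V}) : {subset Y <= s} ->
  (forall y, y \in Y -> #|nbr g Y y| = 2) -> Y != set0 -> {subset s <= Y}.
Proof.
move=> sYs regY /set0Pn[y yY].
have lt_y_n : index y s < n by rewrite index_mem sYs.
have n_gt0 : 0 < n := leq_ltn_trans (leq0n _) lt_y_n.
have succY i : i < n -> s_[i] \in Y -> s_[i.+1 %% n] \in Y.
  move=> lt_i_n siY.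
  have := cycle_nbr_subset sYs lt_i_n.
  rewrite subEproper => /orP[/eqP nbrE | /proper_card]; last first.
    by rewrite regY // cards2; case: eqP.
  have : s_[i.+1 %% n] \in nbr g Y s_[i] by rewrite nbrE setU11.
  by rewrite in_nbr => /andP[].
have reachY k : s_[(index y s + k) %% n] \in Y.
  elim: k => [|k IHk]; first by rewrite addn0 (modn_small lt_y_n) nth_index ?sYs.
  have := succY _ (ltn_pmod _ n_gt0) IHk.
  by rewrite -addn1 modnDml -addnA addn1.
move=> t ts; rewrite -(nth_index x0 ts).
have := reachY (index t s + n - index y s).
by rewrite addnBA ?addKn ?modnDr ?modn_small ?index_mem // ltnW ?ltn_addl.
Qed.

End CycleSubgraphs.

Section BoundaryParity.
Variables (U : finType) (f : rel U) (D : {set U}).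
Hypotheses (f_sym : symmetric f) (f_irr : irreflexive f).
Hypotheses (HG : inG f 3 [set: U]) (HD : is_bdry f (inB f 2) [set: U] D).
Local Notation N u := (nbr f [set: U] u).

Lemma nbr_bdry u : u \in D -> inB f 2 (N u).
Proof. by move/HD => []. Qed.

Lemma nbr_interior u : u \notin D -> inS f 2 (N u).
Proof.
move=> uD; case: HG => sphU _; case: (sphU u (in_setT u)) => // BNu.
by case/negP: uD; apply/HD.
Qed.

Lemma nbr_bdry_edge (T : finType) (e : rel T) (phi : T -> U) :
    (forall u, u \in D <-> exists x, phi x = u) ->
    (forall x y, f (phi x) (phi y) = e x y) ->
    (forall x, is_cycle_ge4 e (nbr e [set: T] x)) ->
  forall u w, u \in D -> w \in D -> w \in N u -> inB f 1 (nbr f (N u) w).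
Proof.
move=> phiD phie cycle_e u w uD wD wNu.
have /inBSE[_ _ [D' [bdD' D'S1]]] := nbr_bdry uD.
suff wD' : w \in D' by have [/(_ wD')[]] := bdD' w.
have D'D y : y \in D' -> y \in D.
  move=> yD'; have [/(_ yD')[yNu By] _] := bdD' y; apply: contraT => yD.
  have uNy : u \in N y by move: yNu; rewrite !in_nbr !in_setT /= f_sym.
  have := inS2_nbr f_sym f_irr (nbr_interior yD) uNy.
  by rewrite nbrC => /inS_inB_disjoint.
have [x0 phi_x0] := (phiD u).1 uD; subst u.
have [s [_ _ nbr_s s_cycle]] := cycle_e x0.
have in_link y : y \in D -> y \in N (phi x0) -> y \in map phi s.
  case/phiD => t <-; rewrite in_nbr in_setT phie /= => e_x0t.
  by apply: map_f; rewrite -nbr_s in_nbr in_setT.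
apply: (cycle_2regular_subgraph (g := f) (x0 := phi x0)) (in_link w wD wNu).
- move=> i j; rewrite size_map => lt_i lt_j.
  by rewrite !(nth_map x0) // phie s_cycle.
- by move=> y yD'; apply: in_link (D'D y yD') _; have [/(_ yD')[]] := bdD' y.
- by move=> y /(inS1_nbr f_irr D'S1) /inS0E[].
- by case/inSSE: D'S1 => _ [_ [y [yD' _]]] _; apply/set0Pn; exists y.
Qed.

Hypothesis bdry_edge : forall u w, u \in D -> w \in D -> w \in N u -> inB f 1 (nbr f (N u) w).

Local Open Scope ring_scope.

Lemma rchi_nbr u : rchi f (N u) = if u \in D then 0 else -1.
Proof.
case: ifP => uD; first exact/(contractible_rchi f_sym f_irr)/inB_contractible/nbr_bdry.
by rewrite (inS_rchi f_sym f_irr (nbr_interior (negbT uD))) expr2 mulN1r opprK.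
Qed.

Lemma rchi_nbr_nbr u w : w \in N u ->
  rchi f (nbr f (N u) w) = if (u \in D) && (w \in D) then 0 else 1.
Proof.
move=> wNu.
have rchi_S1 X : inS f 1 X -> rchi f X = 1.
  by move/(inS_rchi f_sym f_irr); rewrite expr1 opprK.
case: ifP => [/andP[uD wD] | ].
  exact/(contractible_rchi f_sym f_irr)/inB_contractible/bdry_edge.
have [uD /= wD | uD _] := boolP (u \in D); last first.
  exact/rchi_S1/(inS2_nbr f_sym f_irr)/wNu/nbr_interior.
rewrite nbrC; apply/rchi_S1/(inS2_nbr f_sym f_irr); first exact/nbr_interior/negbT.
by move: wNu; rewrite !in_nbr !in_setT /= f_sym.
Qed.

(* The contribution of a k-clique to
   2 sum_v (1 + rchi S(v)) + sum_(u ~ w) (1 - rchi (S(u) :&: S(w))). *)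
Definition boundary_weight (k : nat) : int :=
  ((k.-1 == 0)%:R + (-1) ^+ k.-1) *+ k *+ 2
  + ((k.-2 == 0)%:R - (-1) ^+ k.-2) *+ k.-1 *+ k.

Lemma boundary_weight_dvd4 k : (k <= 4)%N -> (4 %| boundary_weight k)%Z.
Proof. by case: k => [|[|[|[|[|]]]]]. Qed.

Lemma boundary_count_cliques :
  (#|D|.*2 + \sum_(u in D) #|N u :&: D|)%:R =
  \sum_(C | clique f C && (C \subset [set: U])) boundary_weight #|C|.
Proof.
have vertex_term v : (v \in D)%:R = 1 + rchi f (N v).
  by rewrite rchi_nbr; case: (v \in D); rewrite ?addr0 ?subrr.
have edge_term u w : w \in N u -> ((u \in D) && (w \in D))%:R = 1 - rchi f (nbr f (N u) w).
  by move/rchi_nbr_nbr ->; case: (_ && _); rewrite ?subr0 ?subrr.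
have vertices : (#|D|%:R : int) = \sum_(v in [set: U]) (1 + rchi f (N v)).
  rewrite -sum1_card natr_sum big_mkcond [RHS]big_mkcond /=.
  by apply: eq_bigr => v _; rewrite in_setT -vertex_term; case: (v \in D).
have card_setI (A B : {set U}) : #|A :&: B|%:R = \sum_(w in A) (w \in B)%:R :> int.
  rewrite -sum1_card natr_sum big_mkcond [RHS]big_mkcond /=.
  by apply: eq_bigr => w _; rewrite inE; case: (w \in A); case: (w \in B).
have edges : (\sum_(u in D) #|N u :&: D|)%:R =
    \sum_(u in [set: U]) \sum_(w in N u) (1 - rchi f (nbr f (N u) w)).
  rewrite natr_sum big_mkcond [RHS]big_mkcond /=; apply: eq_bigr => u _.
  rewrite in_setT (eq_bigr (fun w => ((u \in D) && (w \in D))%:R)) => [|w /edge_term //].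
  by case: (u \in D); [exact: card_setI | rewrite big1_eq].
have cliques_vertices : \sum_(v in [set: U]) (1 : int) =
    \sum_(C | clique f C && (C \subset [set: U])) (#|C|.-1 == 0)%:R *+ #|C|.
  rewrite -(big_nbr_cliques f_sym f_irr _ (fun k => (k == 0)%:R)).
  by apply: eq_bigr => v _; rewrite big_cliques_card0.
have cliques_edges : \sum_(u in [set: U]) \sum_(w in N u) (1 : int) =
    \sum_(C | clique f C && (C \subset [set: U])) (#|C|.-2 == 0)%:R *+ #|C|.-1 *+ #|C|.
  rewrite -(big_nbr2_cliques f_sym f_irr _ (fun k => (k == 0)%:R)).
  by apply: eq_bigr => u _; apply: eq_bigr => w _; rewrite big_cliques_card0.
rewrite natrD -addnn natrD vertices edges -mulr2n big_split /=.
under [X in _ + X]eq_bigr do rewrite sumrB.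
rewrite sumrB.
rewrite cliques_vertices cliques_edges (big_nbr_cliques f_sym f_irr _ (fun k => (-1) ^+ k)).
rewrite (big_nbr2_cliques f_sym f_irr _ (fun k => (-1) ^+ k)).
rewrite -big_split -sumrMnl -sumrB -big_split; apply: eq_bigr => C _.
by rewrite /= /boundary_weight !mulrnDl !mulNrn.
Qed.

Lemma boundary_parity : (4 %| #|D|.*2 + \sum_(u in D) #|N u :&: D|)%N.
Proof.
have : (4 %| (#|D|.*2 + \sum_(u in D) #|N u :&: D|)%:Z)%Z.
  rewrite -natz boundary_count_cliques; apply: rpred_sum => C /andP[clC sCU].
  exact/boundary_weight_dvd4/(clique_card_le f_sym f_irr HG).
by rewrite dvdzE.
Qed.

End BoundaryParity.

Section Embedding.
Variables (T U : finType) (e : rel T) (f : rel U) (D : {set U}) (phi : T -> U).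
Hypotheses (phi_inj : injective phi) (phiD : forall u, u \in D <-> exists x, phi x = u).
Hypothesis phie : forall x y, f (phi x) (phi y) = e x y.

Lemma image_embedding : D = phi @: [set: T].
Proof.
apply/setP => u; apply/idP/imsetP => [/phiD[x <-] | [x _ ->]]; first by exists x.
by apply/phiD; exists x.
Qed.

Lemma card_embedding : #|D| = #|T|.
Proof. by rewrite image_embedding card_imset // cardsT. Qed.

Lemma sum_degree_embedding :
  \sum_(u in D) #|nbr f [set: U] u :&: D| = \sum_x #|nbr e [set: T] x|.
Proof.
rewrite image_embedding big_imset /=; last by move=> x y _ _; apply: phi_inj.
apply: eq_big => [x | x _]; first by rewrite in_setT.
rewrite -[RHS](card_imset _ phi_inj); apply: eq_card => u.
apply/setIP/imsetP => [[uN /imsetP[t _ ut]] | [t tN ->]].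
  by move: uN; rewrite ut !in_nbr !in_setT phie => e_xt; exists t; rewrite ?in_nbr ?in_setT.
by move: tN; rewrite !in_nbr !in_setT phie => e_xt; split; last exact: imset_f.
Qed.

End Embedding.

(* A 14-vertex triangulation of the projective plane: vertex [k] is adjacent
   to the vertices of the [k]-th list, which lists its unit circle in cyclic
   order. *)
Definition rp2_adj : seq (seq nat) :=
 [:: [:: 4; 5; 6; 7; 8]; [:: 3; 5; 6; 9; 10]; [:: 4; 9; 6; 7; 11; 12];
     [:: 1; 5; 11; 7; 8; 13; 10]; [:: 0; 5; 12; 2; 9; 10; 13; 8];
     [:: 0; 4; 12; 11; 3; 1; 6]; [:: 0; 5; 1; 9; 2; 7]; [:: 0; 6; 2; 11; 3; 8];
     [:: 0; 4; 13; 3; 7]; [:: 1; 6; 2; 4; 10]; [:: 1; 3; 13; 4; 9];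
     [:: 2; 7; 3; 5; 12]; [:: 2; 4; 5; 11]; [:: 3; 8; 4; 10]].

Definition rp2 : rel 'I_14 := fun i j => val j \in nth [::] rp2_adj i.

(* [ord14] and [enum14] avoid the opaque proofs in [ord_enum], so that the
   checks below reduce by [vm_compute]. *)
Definition ord14 (k : nat) : 'I_14 := Ordinal (ltn_pmod k (erefl true : 0 < 14)).
Definition enum14 : seq 'I_14 := map ord14 (iota 0 14).
Definition rp2_circle (x : 'I_14) : seq 'I_14 := map ord14 (nth [::] rp2_adj x).

Definition circle_ok (x : 'I_14) : bool :=
  let s := rp2_circle x in let n := size s in
  [&& 4 <= n, uniq s, all (fun y => rp2 x y == (y \in s)) enum14 &
      all (fun i => all (fun j => rp2 (nth x s i) (nth x s j) ==
             ((j == i.+1 %% n) || (i == j.+1 %% n))) (iota 0 n)) (iota 0 n)].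

Lemma rp2_checks :
  [&& all (fun i => all (fun j => rp2 i j == rp2 j i) enum14) enum14,
      all (fun i => ~~ rp2 i i) enum14 & all circle_ok enum14].
Proof. by vm_compute. Qed.

Lemma rp2_circle_sizes : \sum_(x <- enum14) size (rp2_circle x) = 78.
Proof. by rewrite unlock; vm_compute. Qed.

Lemma mem_enum14 i : i \in enum14.
Proof.
apply/mapP; exists (val i); first by rewrite mem_iota ltn_ord.
by apply: val_inj; rewrite /= modn_small.
Qed.

Lemma perm_enum14 : perm_eq (index_enum 'I_14) enum14.
Proof.
apply: uniq_perm; first exact: index_enum_uniq; first by vm_compute.
by move=> i; rewrite mem_index_enum mem_enum14.
Qed.

Lemma enum14P (P : pred 'I_14) : all P enum14 -> forall i, P i.
Proof. by move/allP => allP i; apply/allP/mem_enum14. Qed.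

Lemma rp2_simple : simple_graph rp2.
Proof.
case/and3P: rp2_checks => /enum14P rp2_sym /enum14P rp2_irr _.
by split=> [i j | i]; [apply/eqP/(enum14P (rp2_sym i)) | apply/negbTE].
Qed.

Lemma nbr_rp2 x : nbr rp2 [set: 'I_14] x =i rp2_circle x.
Proof.
case/and3P: rp2_checks => _ _ /enum14P/(_ x)/and4P[_ _ /enum14P nbr_x _] y.
by rewrite in_nbr in_setT; apply/eqP/nbr_x.
Qed.

Lemma rp2_nbr_cycle x : is_cycle_ge4 rp2 (nbr rp2 [set: 'I_14] x).
Proof.
case/and3P: rp2_checks => _ _ /enum14P/(_ x)/and4P[n_ge4 uniq_s _ /allP cyc].
exists (rp2_circle x); split => // [|x0 i j lt_i lt_j]; first exact: nbr_rp2.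
have := cyc i; rewrite mem_iota add0n lt_i => /(_ isT)/allP/(_ j).
rewrite mem_iota add0n lt_j => /(_ isT)/eqP <-.
by rewrite !(set_nth_default x x0).
Qed.

Lemma rp2_degree_sum : \sum_x #|nbr rp2 [set: 'I_14] x| = 78.
Proof.
rewrite -rp2_circle_sizes -(perm_big _ perm_enum14); apply: eq_bigr => x _.
case/and3P: rp2_checks => _ _ /enum14P/(_ x)/and4P[_ uniq_s _ _].
by rewrite (eq_card (nbr_rp2 x)); apply/card_uniqP.
Qed.

Theorem mainTheorem7 :
  exists (T : finType) (e : rel T),
    simple_graph e /\
    (forall x : T, is_cycle_ge4 e (nbr e [set: T] x)) /\
    ~ (exists (U : finType) (f : rel U) (D : {set U}) (phi : T -> U),
         simple_graph f /\ inG f 3 [set: U] /\ boundary f 3 [set: U] D /\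
         injective phi /\ (forall u, u \in D <-> exists x, phi x = u) /\
         (forall x y, f (phi x) (phi y) = e x y)).
Proof.
exists 'I_14, rp2; split; first exact: rp2_simple.
split=> [|[U [f [D [phi [[f_sym f_irr] [HG [HD [phi_inj [phiD phie]]]]]]]]]].
  exact: rp2_nbr_cycle.
have bdry_edge := nbr_bdry_edge f_sym f_irr HG HD phiD phie rp2_nbr_cycle.
have := boundary_parity f_sym f_irr HG HD bdry_edge.
by rewrite (card_embedding phi_inj phiD) (sum_degree_embedding phi_inj phiD phie)
  rp2_degree_sum card_ord.
Qed.
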